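(* Let $(t_n(x))_{n\ge0}$ be the generalized Gončarov basis associated with $(\mathfrak d,\mathcal Z)$, $\mathcal Z=(z_i)_{i\ge0}$, and let $d(t)\in\mathbb K[[t]]$ be the compositional inverse of the $D$-indicator of $\mathfrak d$. Then, as formal power series in $t$ with coefficients in $\mathbb K[x]$, $$e^{x\,d(t)}=\sum_{n\ge0}\frac{1}{n!}\,t_n(x)\,e^{z_n d(t)}\,t^n.$$ In particular, if $\mathfrak d=D$, then $e^{xt}=\sum_{n\ge0}\frac1{n!}t_n(x)e^{z_nt}t^n$.
   Context: $\mathbb K$ is a field of characteristic zero, $D=d/dx$ on $\mathbb K[x]$. A delta operator is a linear operator $\mathfrak d$ on $\mathbb K[x]$ commuting with all shifts $E_a:f(x)\mapsto f(x+a)$ and with $\mathfrak d(x)$ a nonzero constant. Every shift-invariant operator $S$ can be written uniquely as $S=\sum_{k\ge0}c_kD^k$; the formal power series $q(t)=\sum_k c_kt^k$ is its $D$-indicator. For a delta operator, $q(0)=0$ and $q'(0)\neq0$, so $q$ has a compositional inverse $d(t)$. $\varepsilon_z$ is evaluation at $z$. The generalized Gončarov basis associated with $(\mathfrak d,\mathcal Z)$ is the unique sequence $(t_n)_{n\ge0}$ with $\deg t_n=n$ and $\varepsilon_{z_i}(\mathfrak d^{\,i}(t_n))=n!\,\delta_{i,n}$ for all $i,n$. *)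

From HB Require Import structures.
From mathcomp Require Import all_boot all_order all_algebra.
Set Implicit Arguments. Unset Strict Implicit. Unset Printing Implicit Defensive.
Import Order.TTheory GRing.Theory Num.Theory.
Local Open Scope ring_scope.

(* Formal power series in t with coefficients in R, given by their
   coefficient sequences: f m is the coefficient of t^m. *)
Definition fps (R : Type) := nat -> R.

Section FPS.
Variable R : pzRingType.

Definition fps_one : fps R := fun m => (m == 0%N)%:R.
Definition fps_X : fps R := fun m => (m == 1%N)%:R.

Definition fps_mul (f g : fps R) : fps R :=
  fun m => \sum_(i < m.+1) f i * g (m - i)%N.

Fixpoint fps_pow (f : fps R) (k : nat) : fps R :=
  match k with
  | 0 => fps_one
  | k'.+1 => fps_mul f (fps_pow f k')
  end.

(* composition f(g(t)); meaningful when g 0 = 0, since then g^k has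
   order >= k and only k <= m contributes to the coefficient of t^m *)
Definition fps_comp (f g : fps R) : fps R :=
  fun m => \sum_(k < m.+1) f k * fps_pow g k m.
End FPS.

(* exponential exp(f) = sum_k f^k / k! of a series f with f 0 = 0, with
   coefficients in a K-algebra A (K a field of characteristic 0);
   again only k <= m contributes to the coefficient of t^m. *)
Definition fps_exp (K : fieldType) (A : lalgType K) (f : fps A) : fps A :=
  fun m => \sum_(k < m.+1) ((k`!)%:R^-1 : K) *: fps_pow f k m.

Definition shift (K : fieldType) (a : K) (p : {poly K}) : {poly K} :=
  p \Po ('X + a%:P).

Definition delta_operator (K : fieldType) (dd : {linear {poly K} -> {poly K}}) :=
  (forall a p, dd (shift a p) = shift a (dd p)) /\
  exists2 c : K, c != 0 & dd 'X = c%:P.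

(* q is the D-indicator of the shift-invariant operator S:
   S = sum_k q_k D^k (on p only k < size p contributes). *)
Definition D_indicator (K : fieldType) (S : {poly K} -> {poly K}) (q : fps K) :=
  forall p, S p = \sum_(k < size p) q k *: p^`(k).

Definition comp_inverse (K : fieldType) (q d : fps K) :=
  [/\ q 0%N = 0, d 0%N = 0, fps_comp q d = fps_X K & fps_comp d q = fps_X K].

Definition goncarov_basis (K : fieldType) (dd : {poly K} -> {poly K})
    (z : nat -> K) (t : nat -> {poly K}) :=
  (forall n, size (t n) = n.+1) /\
  (forall i n, (iter i dd (t n)).[z i] = (n`! * (i == n))%:R).

From HB Require Import structures.
From mathcomp Require Import all_boot all_order all_algebra.
From mathcomp Require Import zify.
Set Implicit Arguments. Unset Strict Implicit.
Import GRing.Theory.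
Local Open Scope ring_scope.

(* The coefficient of t^k in e^{x d(t)} is a polynomial P_k(x) of degree at
   most k. Since dd = q(D) and D e^{x d(t)} = d(t) e^{x d(t)}, the operator dd
   multiplies e^{x d(t)} by q(d(t)) = t, i.e. dd P_{k+1} = P_k. The Goncarov
   conditions make p |-> (dd^n p)(z_n) / n! the coordinates in the basis (t_n),
   so P_m = sum_n P_{m-n}(z_n) t_n / n!, which is the coefficient of t^m on the
   right-hand side. Only the D-indicator of dd and q(d(t)) = t are needed. *)

Lemma sum_ord_widen (V : nmodType) (n N : nat) (F : nat -> V) :
  (n <= N)%N -> (forall j, (n <= j < N)%N -> F j = 0) ->
  \sum_(j < n) F j = \sum_(j < N) F j.
Proof.
move=> le_nN F0; rewrite (big_ord_widen _ _ le_nN) big_mkcond /=.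
by apply: eq_bigr => j _; case: ltnP => // le_nj; rewrite F0 // le_nj ltn_ord.
Qed.

Section FpsPow.
Variable R : pzRingType.

Lemma fps_pow_eq0 (f : fps R) k m : f 0%N = 0 -> (m < k)%N -> fps_pow f k m = 0.
Proof.
move=> f0; elim: k m => [|k IHk] m // lt_mk; rewrite /= /fps_mul big1 // => i _.
case: (posnP i) => [->|i_gt0]; first by rewrite f0 mul0r.
by rewrite IHk ?mulr0 //; have := ltn_ord i; lia.
Qed.

Lemma fps_pow_map (S : pzRingType) (phi : {rmorphism R -> S}) (f : fps R) k m :
  fps_pow (fun j => phi (f j)) k m = phi (fps_pow f k m).
Proof.
elim: k m => [|k IHk] m /=; first by rewrite /fps_one rmorph_nat.
by rewrite /fps_mul rmorph_sum; apply: eq_bigr => i _; rewrite IHk rmorphM.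
Qed.

End FpsPow.

Lemma fps_pow_scale (R : comPzRingType) (a : R) (f g : fps R) k m :
  (forall j, g j = a * f j) -> fps_pow g k m = a ^+ k * fps_pow f k m.
Proof.
move=> gE; elim: k m => [|k IHk] m /=; first by rewrite mul1r.
rewrite /fps_mul mulr_sumr; apply: eq_bigr => i _.
by rewrite gE IHk exprS mulrACA.
Qed.

Section Truncation.
Variable R : nzRingType.

Definition trunc_fps (N : nat) (f : fps R) : {poly R} := \poly_(i < N) f i.

Lemma fps_pow_trunc (N : nat) (f : fps R) k m :
  (m < N)%N -> fps_pow f k m = (trunc_fps N f ^+ k)`_m.
Proof.
elim: k m => [|k IHk] m lt_mN /=; first by rewrite /fps_one coef1.
rewrite /fps_mul exprS coefM; apply: eq_bigr => i _.
rewrite IHk; last by rewrite (leq_ltn_trans (leq_subr _ _)).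
by rewrite coef_poly (leq_ltn_trans _ lt_mN) // -ltnS.
Qed.

End Truncation.

Section CompositionalInverse.
Variables (R : comNzRingType) (q d : fps R).
Hypotheses (d0 : d 0%N = 0) (qd_X : fps_comp q d = fps_X R).

Lemma trunc_comp_coef N j : (j < N)%N ->
  (\sum_(l < N) q l *: trunc_fps N d ^+ l)`_j = (j == 1%N)%:R.
Proof.
move=> lt_jN; rewrite -[RHS]/(fps_X R j) -qd_X coef_sum /fps_comp.
rewrite (@sum_ord_widen _ j.+1 N (fun l => q l * fps_pow d l j)) //.
  by apply: eq_bigr => l _; rewrite coefZ -fps_pow_trunc.
by move=> l /andP[lt_jl _]; rewrite fps_pow_eq0 ?mulr0.
Qed.

(* Since q(d(t)) = t, the coefficient of t^{k+1} in d^i q(d) is that of t^k in d^i. *)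
Lemma fps_pow_comp_shift i k :
  \sum_(l < k.+2) q l * fps_pow d (l + i) k.+1 = fps_pow d i k.
Proof.
set N := k.+2; set δ := trunc_fps N d; set C := \sum_(l < N) q l *: δ ^+ l.
have -> : \sum_(l < N) q l * fps_pow d (l + i) k.+1 = (δ ^+ i * C)`_k.+1.
  rewrite mulr_sumr coef_sum; apply: eq_bigr => l _.
  by rewrite -scalerAr coefZ -exprD addnC -fps_pow_trunc.
have -> : (δ ^+ i * C)`_k.+1 = (δ ^+ i * 'X)`_k.+1.
  rewrite !coefM; apply: eq_bigr => j _.
  by rewrite coefX trunc_comp_coef // ltnS leq_subr.
by rewrite coefMX -fps_pow_trunc.
Qed.

End CompositionalInverse.

Section ExponentialCoefficients.
Variables (K : fieldType) (d : fps K).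
Hypothesis d0 : d 0%N = 0.

(* The coefficient of t^k in e^{x d(t)}. *)
Definition exp_coef (k : nat) : {poly K} :=
  \poly_(j < k.+1) ((j`!)%:R^-1 * fps_pow d j k).

Lemma coef_exp_coef k j : (exp_coef k)`_j = (j`!)%:R^-1 * fps_pow d j k.
Proof.
by rewrite coef_poly; case: ltnP => // lt_kj; rewrite fps_pow_eq0 ?mulr0.
Qed.

Lemma fps_exp_scale (a : {poly K}) (f : fps {poly K}) k :
  (forall j, f j = a * (d j)%:P) -> fps_exp f k = exp_coef k \Po a.
Proof.
move=> fE; rewrite /fps_exp /exp_coef poly_def raddf_sum; apply: eq_bigr => j _.
rewrite /= comp_polyZ comp_Xn_poly (fps_pow_scale _ _ fE) (fps_pow_map polyC).
by rewrite mulrC mul_polyC scalerA.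
Qed.

End ExponentialCoefficients.

Lemma D_indicator_widen (K : fieldType) (S : {poly K} -> {poly K}) (q : fps K)
    (p : {poly K}) n :
  D_indicator S q -> (size p <= n)%N -> S p = \sum_(l < n) q l *: p^`(l).
Proof.
move=> Sq le_pn; rewrite Sq (sum_ord_widen (F := fun l => q l *: p^`(l)) le_pn) //.
by move=> l /andP[le_pl _]; rewrite derivn_poly0 ?scaler0.
Qed.

Section CharZero.
Variables (K : fieldType) (charK : [pchar K] =i pred0).

Lemma natf_fact_neq0 n : (n`!%:R : K) != 0.
Proof. by rewrite (pcharf0P K).1 // -lt0n fact_gt0. Qed.

Lemma invf_fact_mulrn_ffact l i :
  ((l + i)`!%:R^-1 : K) *+ (l + i) ^_ l = (i`!%:R)^-1.
Proof.
have ffact_neq0 : ((l + i) ^_ l)%:R != 0 :> K.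
  by rewrite (pcharf0P K).1 // -lt0n ffact_gt0 leq_addr.
rewrite -(ffact_fact (leq_addr i l)) addKn natrM invfM -[_ *+ _]mulr_natr.
by rewrite mulrAC mulVf ?mul1r.
Qed.

Variables (dd : {linear {poly K} -> {poly K}}) (q d : fps K).
Hypotheses (hq : D_indicator dd q) (d0 : d 0%N = 0) (qd_X : fps_comp q d = fps_X K).

Lemma delta_exp_coef k : dd (exp_coef d k.+1) = exp_coef d k.
Proof.
have size_exp : (size (exp_coef d k.+1) <= k.+2)%N by apply: size_poly.
rewrite (D_indicator_widen hq size_exp); apply/polyP => i.
rewrite coef_sum coef_exp_coef // -(fps_pow_comp_shift d0 qd_X i k) mulr_sumr.
apply: eq_bigr => l _.
rewrite coefZ coef_derivn coef_exp_coef // -mulrnAl invf_fact_mulrn_ffact.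
by rewrite mulrCA.
Qed.

Lemma iter_delta_exp_coef m n :
  (n <= m)%N -> iter n dd (exp_coef d m) = exp_coef d (m - n).
Proof.
elim: n => [|n IHn] lt_nm; first by rewrite subn0.
by rewrite iterS IHn ?(ltnW lt_nm) // -(subnSK lt_nm) delta_exp_coef.
Qed.

End CharZero.

Lemma iter_linear_sum (R : pzRingType) (V : lmodType R) (f : {linear V -> V})
    (I : Type) (r : seq I) (c : I -> R) (v : I -> V) i :
  iter i f (\sum_(n <- r) c n *: v n) = \sum_(n <- r) c n *: iter i f (v n).
Proof.
elim: i => [|i IHi] //=; rewrite IHi linear_sum.
by apply: eq_bigr => n _; rewrite linearZ.
Qed.

Lemma graded_family_span (K : fieldType) (t : nat -> {poly K}) N (p : {poly K}) :
  (forall n, size (t n) = n.+1) -> (size p <= N)%N ->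
  exists c : nat -> K, p = \sum_(n < N) c n *: t n.
Proof.
move=> size_t; elim: N p => [|N IHN] p le_pN.
  by exists (fun _ => 0); rewrite big_ord0; apply/eqP; rewrite -size_poly_eq0 -leqn0.
have lead_tN : lead_coef (t N) = (t N)`_N by rewrite lead_coefE size_t.
have tN_neq0 : lead_coef (t N) != 0 by rewrite lead_coef_eq0 -size_poly_gt0 size_t.
pose a := p`_N / lead_coef (t N).
have [|c pE] := IHN (p - a *: t N).
  apply/leq_sizeP => j; rewrite leq_eqVlt => /orP[/eqP <-|lt_Nj].
    by rewrite coefB coefZ -lead_tN divfK ?subrr.
  by rewrite coefB coefZ !nth_default ?mulr0 ?subr0 ?size_t // (leq_trans le_pN).
exists (fun n => if n == N then a else c n).
rewrite big_ord_recr /= eqxx -[p](subrK (a *: t N)) pE; congr (_ + _).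
by apply: eq_bigr => i _; rewrite ltn_eqF.
Qed.

Lemma goncarov_expansion (K : fieldType) (charK : [pchar K] =i pred0)
    (dd : {linear {poly K} -> {poly K}}) (z : nat -> K) (t : nat -> {poly K})
    N (p : {poly K}) :
  goncarov_basis dd z t -> (size p <= N)%N ->
  p = \sum_(n < N) ((n`!)%:R^-1 * (iter n dd p).[z n]) *: t n.
Proof.
move=> [size_t eval_t] le_pN; have [c pE] := graded_family_span size_t le_pN.
rewrite [in LHS]pE; apply: eq_bigr => i _.
rewrite pE iter_linear_sum horner_sum (bigD1 i) //= big1 ?addr0.
  by rewrite hornerZ eval_t eqxx muln1 mulrCA mulVf ?mulr1 ?(natf_fact_neq0 charK).
move=> j neq_ji; rewrite hornerZ eval_t.
by rewrite eq_sym (inj_eq val_inj) (negbTE neq_ji) muln0 mulr0.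
Qed.

Theorem mainTheorem13 (K : fieldType) (charK : [pchar K] =i pred0)
  (dd : {linear {poly K} -> {poly K}}) (hdd : delta_operator dd)
  (q : fps K) (hq : D_indicator dd q)
  (d : fps K) (hd : comp_inverse q d)
  (z : nat -> K) (t : nat -> {poly K}) (ht : goncarov_basis dd z t) :
  forall m : nat,
    fps_exp (fun j => 'X * (d j)%:P) m =
    \sum_(n < m.+1)
       ((n`!)%:R^-1 : K) *: (t n * fps_exp (fun j => (z n * d j)%:P) (m - n)%N).
Proof.
move=> m; case: hd => _ d0 qd_X _.
rewrite (fps_exp_scale (d := d) (a := 'X)) // comp_polyXr.
rewrite [LHS](goncarov_expansion charK ht (size_poly _ _)).
apply: eq_bigr => n _; have le_nm : (n <= m)%N by rewrite -ltnS.
rewrite (iter_delta_exp_coef charK hq d0 qd_X le_nm).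
rewrite (fps_exp_scale (d := d) (a := (z n)%:P)) => [|j]; last by rewrite polyCM.
by rewrite comp_polyCr [t n * _]mulrC mul_polyC scalerA.
Qed.
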